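(* For every infinite set $\Lambda\subseteq\mathbb{N}$ there exists an increasing sequence $(N_t)_{t\ge0}$ of elements of $\Lambda$ such that for all $n\ge0$, $c\in\{0,1\}$ and $k\in\mathbb{Z}$: (1) the limit $\mu_n(c,k)=\lim_{t\to\infty}\dfrac{C_n\big(c,k,(2/3)^nN_t\big)}{(2/3)^nN_t}$ exists; (2) $\mu_n(c,k+2^n)=\mu_n(c,k)$; (3) letting $q_n$ be an integer with $3q_n\equiv1\pmod{2^{n+1}}$, \[ \tfrac32\,\mu_n(c,k)=\mu_{n+1}(c,2q_nk)+\mu_{n+1}(\bar c,2q_nk-q_n)+\mu_{n+1}(c,2q_nk-2q_n), \] where $\bar c=1-c$; (4) $\mu_n(0,k)+\mu_n(1,k)=2^{-n}$.
   Context: The Thue--Morse word in base $3/2$ is the unique binary sequence $\mathbf{t}_{3/2}=(t_i)_{i\ge0}$ with $t_0=0$, $t_{3n}=t_{3n+1}=t_{2n}$ and $t_{3n+2}=1-t_{2n+1}$ for all $n\ge0$ (equivalently, $t_i$ is the digit sum modulo $2$ of the base-$3/2$ expansion of $i$). For $n\ge0$, $c\in\{0,1\}$, $k\in\mathbb{Z}$ and a real number $\alpha\ge0$, $C_n(c,k,\alpha)=\#\{i\in\mathbb{Z}: 0\le i<\alpha,\ t_i=c,\ i\equiv k\pmod{2^n}\}$. *)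

From HB Require Import structures.
From mathcomp Require Import all_boot all_order all_algebra.
From mathcomp Require Import all_classical all_reals all_analysis.
Set Implicit Arguments. Unset Strict Implicit. Unset Printing Implicit Defensive.
Import Order.TTheory GRing.Theory Num.Theory.
Local Open Scope ring_scope.

(* Thue--Morse word in base 3/2, bits as booleans (false = 0, true = 1):
   t_0 = 0, t_{3n} = t_{3n+1} = t_{2n}, t_{3n+2} = 1 - t_{2n+1}.
   Computed with fuel; for i >= 1 the recursive index is < i, so fuel i.+1
   suffices. *)
Fixpoint tm_aux (fuel i : nat) : bool :=
  match fuel with
  | 0 => false
  | f.+1 =>
    if i == 0%N then false
    else if (i %% 3 == 2)%N then ~~ tm_aux f (2 * (i %/ 3)).+1
    else tm_aux f (2 * (i %/ 3))
  end.

Definition tm (i : nat) : bool := tm_aux i.+1 i.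

(* C_n(c,k,alpha) = #{ i in Z : 0 <= i < alpha, t_i = c, i = k mod 2^n }.
   Integers 0 <= i < alpha all lie in [0, truncn alpha], so we count there. *)
Definition Ccount {R : realType} (n : nat) (c : bool) (k : int) (alpha : R) : nat :=
  count (fun i : nat => [&& (i%:R < alpha), tm i == c &
                            (i%:Z == k %[mod (2 ^ n)%:Z])%Z])
        (iota 0 (Num.truncn alpha).+1).

(* Write a = (2/3)^n N and fix q with 3q = 1 mod 2^{n+1}.  The integers
   below a come in blocks {3m, 3m+1, 3m+2}, matching the pairs {2m, 2m+1}
   below 2a/3: t_{3m} = t_{3m+1} = t_{2m}, t_{3m+2} = 1 - t_{2m+1}, and
   multiplying by 2q shows that 3m + r = k mod 2^n iff 2m = 2q(k - r) mod
   2^{n+1}.  Up to the incomplete last blocks this gives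
     C_n(c,k,a) = C_{n+1}(c,2qk,2a/3) + C_{n+1}(1-c,2qk-q,2a/3)
                  + C_{n+1}(c,2qk-2q,2a/3) + O(1),
   and, counting a residue class modulo 2^n, C_n(0,k,a) + C_n(1,k,a) =
   a/2^n + O(1).  The ratios C_n(c,k,a)/a are bounded, so a diagonal
   Bolzano-Weierstrass extraction from an increasing enumeration of Lambda
   makes all of them (countably many) converge at once; dividing the O(1)
   errors by a, which tends to infinity, gives (3) and (4), while (2) already
   holds for the counts. *)

From HB Require Import structures.
From mathcomp Require Import all_boot all_order all_algebra.
From mathcomp Require Import all_classical all_reals all_analysis.
From mathcomp Require Import zify ring lra.
Import Order.TTheory GRing.Theory Num.Theory.
Import numFieldNormedType.Exports.
Local Open Scope ring_scope.
Local Open Scope classical_set_scope.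

Lemma bounded_fun_ex_le {R : realType} {T : Type} (f : T -> R) :
  (exists M, forall x, `|f x| <= M) -> bounded_fun f.
Proof.
case=> M f_le; rewrite /bounded_fun /bounded_near /=; near=> M' => x _.
by rewrite (le_trans (f_le x)) //; near: M'; apply: nbhs_pinfty_ge; rewrite num_real.
Unshelve. all: end_near. Qed.

Lemma bounded_fun_comp {R : realType} {T U : Type} (g : T -> U) {f : U -> R} :
  bounded_fun f -> bounded_fun (f \o g).
Proof. by move=> [M [M_real f_le]]; exists M; split => // M' /f_le + x _; apply. Qed.

Lemma increasing_seq_geq {f : nat -> nat} : increasing_seq f -> forall n, (n <= f n)%N.
Proof.
by move=> f_incr; elim=> // n IH; apply: leq_ltn_trans IH ((increasing_seqP f).2 f_incr n).
Qed.

Lemma increasing_seq_comp (f g : nat -> nat) :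
  increasing_seq f -> increasing_seq g -> increasing_seq (f \o g).
Proof. by move=> f_incr g_incr m n; apply: etrans (f_incr _ _) (g_incr _ _). Qed.

Lemma cvg_near_subseq {T : topologicalType} (u v : nat -> T) (l : T) :
  (\forall t \near \oo, exists2 s, (t <= s)%N & v t = u s) ->
  u @ \oo --> l -> v @ \oo --> l.
Proof.
move=> v_sub u_l A /u_l [M _ uA].
apply: filterS2 v_sub (nbhs_infty_ge M) => t [s le_ts v_t] le_Mt.
by rewrite /= v_t; apply: uA; exact: leq_trans le_ts.
Qed.

Section diagonal_extraction.
Context {R : realType} (u : nat -> nat -> R).
Variable F : nat -> (nat -> nat) -> nat -> nat.
Hypothesis F_incr : forall j S, increasing_seq (F j S).
Hypothesis F_cvg : forall j S, cvgn (u j \o S \o F j S).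

Fixpoint nested_extraction (j : nat) : nat -> nat :=
  if j is j'.+1 then nested_extraction j' \o F j' (nested_extraction j') else id.

Lemma nested_extraction_incr j : increasing_seq (nested_extraction j).
Proof. by elim: j => [//|j IH] /=; apply: increasing_seq_comp. Qed.

Lemma nested_extraction_factor i t : (i <= t)%N ->
  exists2 h, increasing_seq h & nested_extraction t = nested_extraction i \o h.
Proof.
elim: t => [|t IH]; first by rewrite leqn0 => /eqP ->; exists id.
rewrite leq_eqVlt => /orP[/eqP -> | /IH [h h_incr ext_t]]; first by exists id.
exists (h \o F t (nested_extraction t)); first exact: increasing_seq_comp.
by rewrite /= ext_t.
Qed.

Definition diagonal_subseq t := nested_extraction t t.

Lemma diagonal_subseq_incr : increasing_seq diagonal_subseq.
Proof.
apply/increasing_seqP => t.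
rewrite /diagonal_subseq /= (leW_mono (nested_extraction_incr t)).
exact: increasing_seq_geq (F_incr _ _) _.
Qed.

Lemma diagonal_subseq_cvg j : cvgn (u j \o diagonal_subseq).
Proof.
apply/cvg_ex; exists (lim (u j \o nested_extraction j.+1 @ \oo)).
apply: cvg_near_subseq (F_cvg j (nested_extraction j)).
near=> t; have [h h_incr ext_t] : exists2 h, increasing_seq h &
    nested_extraction t = nested_extraction j.+1 \o h.
  by apply: nested_extraction_factor; near: t; apply: nbhs_infty_ge.
by exists (h t); [exact: increasing_seq_geq | rewrite /= /diagonal_subseq ext_t].
Unshelve. all: end_near. Qed.
End diagonal_extraction.

Lemma bolzano_weierstrass_diagonal {R : realType} {I : countType} (u : I -> nat -> R) :
  (forall i, bounded_fun (u i)) ->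
  exists2 phi, increasing_seq phi & forall i, cvgn (u i \o phi).
Proof.
move=> u_bnd.
pose v j := if unpickle j is Some i then u i else fun=> 0.
have v_bnd j : bounded_fun (v j).
  rewrite /v; case: (unpickle j) => [i|//]; first exact: u_bnd.
  by apply: bounded_fun_ex_le; exists 0 => _; rewrite normr0.
have /choice [F F_spec] : forall jS : nat * (nat -> nat),
    exists f, increasing_seq f /\ cvgn (v jS.1 \o jS.2 \o f).
  move=> [j S].
  by have [f] := bolzano_weierstrass (bounded_fun_comp S (v_bnd j)); exists f.
pose G j S := F (j, S).
exists (diagonal_subseq G).
  by apply: diagonal_subseq_incr => j S; case: (F_spec (j, S)).
move=> i; have -> : u i = v (pickle i) by rewrite /v pickleK.
by apply: diagonal_subseq_cvg => j S; case: (F_spec (j, S)).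
Qed.

Lemma cvg_gap_unique {R : realType} {a u v : nat -> R} (K : R) {l l' : R} :
  a @ \oo --> +oo -> (forall t, 0 < a t -> `|u t - v t| <= K / a t) ->
  u @ \oo --> l -> v @ \oo --> l' -> l = l'.
Proof.
move=> a_oo gap u_l v_l'.
have a_gt0 : \forall t \near \oo, 0 < a t by exact: cvgry_gt.
have Ka_0 : (fun t => K / a t) @ \oo --> 0.
  rewrite -(mulr0 K); apply: cvgM; first exact: cvg_cst.
  by apply/(gtr0_cvgV0 a_gt0).
have uv_0 : (fun t => u t - v t) @ \oo --> 0.
  apply: (@squeeze_cvgr _ _ _ _ (fun t => - (K / a t)) (fun t => K / a t)) => //.
    by near=> t; rewrite -ler_norml gap //; near: t.
  by rewrite -oppr0; apply: cvgN.
apply/eqP; rewrite -subr_eq0; apply/eqP.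
exact: cvg_unique (cvgB u_l v_l') uv_0.
Unshelve. all: end_near. Qed.

Lemma tm_aux_fuel f g i : (i < f)%N -> (i < g)%N -> tm_aux f i = tm_aux g i.
Proof.
elim: f g i => [|f IH] [|g] i //= ltif ltig.
case: eqP => // /eqP i_neq0.
by case: ifP => /eqP i_mod3; rewrite (IH g) //; lia.
Qed.

Lemma tm_rec i : (0 < i)%N ->
  tm i = if (i %% 3 == 2)%N then ~~ tm (2 * (i %/ 3)).+1%N else tm (2 * (i %/ 3))%N.
Proof.
move=> i_gt0; rewrite [tm i]/tm /= gtn_eqF //.
by case: ifP => /eqP i_mod3; [congr (~~ _)|]; apply: tm_aux_fuel; lia.
Qed.

Lemma tm_mul3 m : tm (3 * m)%N = tm (2 * m)%N.
Proof.
case: m => [|m] //; rewrite tm_rec ?muln_gt0 //.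
by rewrite modnMr mulKn.
Qed.

Lemma tm_mul3_add1 m : tm (3 * m + 1)%N = tm (2 * m)%N.
Proof.
rewrite tm_rec ?addn1 // -addn1.
have -> : ((3 * m + 1) %% 3 = 1)%N by lia.
by have -> : ((3 * m + 1) %/ 3 = m)%N by lia.
Qed.

Lemma tm_mul3_add2 m : tm (3 * m + 2)%N = ~~ tm (2 * m + 1)%N.
Proof.
rewrite tm_rec ?addn2 // -addn2.
have -> : ((3 * m + 2) %% 3 = 2)%N by lia.
have -> : ((3 * m + 2) %/ 3 = m)%N by lia.
by rewrite addn1.
Qed.

Section ceiln.
Context {R : realType}.
Implicit Types a : R.

Definition ceiln a : nat := `|Num.ceil a|%N.

Lemma ceilnE a : 0 <= a -> (ceiln a)%:Z = Num.ceil a.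
Proof. by move=> a_ge0; rewrite gez0_abs // ceil_ge0 (lt_le_trans _ a_ge0). Qed.

Lemma ltr_nat_ceiln a i : 0 <= a -> (i%:R < a) = (i < ceiln a)%N.
Proof. by move=> a_ge0; rewrite -ltz_nat ceilnE // ceil_gt_int. Qed.

Lemma ceiln_itv a : 0 <= a -> a <= (ceiln a)%:R < a + 1.
Proof.
move=> a_ge0; have /andP[lt_a a_le] := ceil_itv a.
rewrite -[(ceiln a)%:R]/((ceiln a)%:Z%:~R) ceilnE // a_le /=.
by rewrite -ltrBlDr -[1]/(1%:~R) -rmorphB.
Qed.
End ceiln.

Lemma count_iota_le (p : pred nat) {m m' : nat} : (m <= m')%N ->
  (count p (iota 0 m) <= count p (iota 0 m') <= count p (iota 0 m) + (m' - m))%N.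
Proof.
move=> le_mm'; rewrite -(subnKC le_mm') iotaD count_cat add0n addKn leq_addr.
by rewrite leq_add2l (leq_trans (count_size _ _)) // size_iota.
Qed.

Lemma ler_dist_nat {R : realDomainType} (x y d : nat) :
  (x <= y + d)%N -> (y <= x + d)%N -> `|x%:R - y%:R| <= d%:R :> R.
Proof.
rewrite -!(ler_nat R) !natrD => ? ?.
by rewrite ler_norml; apply/andP; split; lra.
Qed.

Definition tm_class (n : nat) (c : bool) (k : int) (i : nat) : bool :=
  (tm i == c) && (i%:Z == k %[mod (2 ^ n)%:Z])%Z.

Lemma Ccount_ceiln {R : realType} n c k (a : R) : 0 <= a ->
  Ccount n c k a = count (tm_class n c k) (iota 0 (ceiln a)).
Proof.
move=> a_ge0; have /andP[_ lt_ceil] := ceiln_itv _ a_ge0.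
have le_ceil : (ceiln a <= (Num.truncn a).+1)%N.
  by rewrite -ltnS -(ltr_nat R) (lt_le_trans lt_ceil) // -natr1 lerD2r ltW // truncnS_gt.
rewrite /Ccount -(subnKC le_ceil) iotaD count_cat add0n.
rewrite (@eq_in_count _ _ pred0 (iota (ceiln a) _)); last first.
  by move=> i; rewrite mem_iota => /andP[le_i _] /=; rewrite ltr_nat_ceiln // ltnNge le_i.
rewrite count_pred0 addn0; apply: eq_in_count => i.
by rewrite mem_iota /= ltr_nat_ceiln // => ->.
Qed.

Lemma Ccount_periodic {R : realType} n c k (a : R) :
  Ccount n c (k + (2 ^ n)%:Z) a = Ccount n c k a.
Proof. by apply: eq_count => i; rewrite modzDr. Qed.

Lemma eqz_mod_mul3_add {P q : int} : (2 * P %| 3 * q - 1)%Z -> forall m r k : int,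
  (3 * m + r == k %[mod P])%Z = (2 * m == 2 * q * (k - r) %[mod 2 * P])%Z.
Proof.
move=> /dvdzP[u q_eq] m r k.
rewrite !eqz_mod_dvd; apply/dvdzP/dvdzP => -[x x_eq].
  exists (q * x - 2 * m * u).
  transitivity (2 * q * (3 * m + r - k) - 2 * m * (3 * q - 1)); first ring.
  by rewrite q_eq x_eq; ring.
have {}x_eq : m - q * (k - r) = x * P by apply: (@mulfI _ 2) => //; rewrite mulrBr; lia.
exists (2 * u * (k - r) + 3 * x).
transitivity (3 * (m - q * (k - r)) + (3 * q - 1) * (k - r)); first ring.
by rewrite q_eq x_eq; ring.
Qed.

Lemma tm_class_parity n c y i : tm_class n.+1 c y i -> (2 %| i%:Z - y)%Z.
Proof.
case/andP=> _; rewrite eqz_mod_dvd; apply: dvdz_trans.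
by rewrite expnS PoszM dvdz_mulr.
Qed.

Section tm_class_blocks.
Variables (n : nat) (q : int).
Hypothesis q_inv3 : (3 * q == 1 %[mod (2 ^ n.+1)%:Z])%Z.

Let q_dvd : (2 * (2 ^ n)%:Z %| 3 * q - 1)%Z.
Proof. by rewrite -PoszM -expnS -eqz_mod_dvd. Qed.

Let mod2P (i : nat) (k : int) :
  (i%:Z == k %[mod (2 ^ n.+1)%:Z])%Z = (i%:Z == k %[mod 2 * (2 ^ n)%:Z])%Z.
Proof. by rewrite expnS PoszM. Qed.

Lemma tm_class_mul3 c k m :
  tm_class n c k (3 * m)%N = tm_class n.+1 c (2 * q * k) (2 * m)%N.
Proof.
rewrite /tm_class tm_mul3 mod2P !PoszM -[X in (X == k %[mod _])%Z]addr0.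
by rewrite (eqz_mod_mul3_add q_dvd) subr0.
Qed.

Lemma tm_class_mul3_add1 c k m :
  tm_class n c k (3 * m + 1)%N = tm_class n.+1 c (2 * q * k - 2 * q) (2 * m)%N.
Proof.
rewrite /tm_class tm_mul3_add1 mod2P PoszD !PoszM (eqz_mod_mul3_add q_dvd).
by rewrite mulrBr mulr1.
Qed.

Lemma tm_class_mul3_add2 c k m :
  tm_class n c k (3 * m + 2)%N = tm_class n.+1 (~~ c) (2 * q * k - q) (2 * m + 1)%N.
Proof.
rewrite /tm_class tm_mul3_add2 mod2P PoszD [Posz (2 * m + 1)]PoszD !PoszM.
rewrite (eqz_mod_mul3_add q_dvd).
congr (_ && _); first by case: (tm _); case: c.
rewrite !eqz_mod_dvd; move: q_dvd => /dvdzP[u q_eq].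
by apply/dvdzP/dvdzP => -[x x_eq]; [exists (x - u) | exists (x + u)]; lia.
Qed.

Lemma count_tm_class_mul3 c k M :
  count (tm_class n c k) (iota 0 (3 * M)) =
  (count (tm_class n.+1 c (2 * q * k)) (iota 0 (2 * M))
   + count (tm_class n.+1 (~~ c) (2 * q * k - q)) (iota 0 (2 * M))
   + count (tm_class n.+1 c (2 * q * k - 2 * q)) (iota 0 (2 * M)))%N.
Proof.
have odd_class y m c' : (2 %| y)%Z -> tm_class n.+1 c' y (2 * m + 1)%N = false.
  move=> /dvdzP[x ->]; apply/negP => /tm_class_parity /dvdzP[z]; lia.
have even_class m c' : tm_class n.+1 c' (2 * q * k - q) (2 * m)%N = false.
  move: q_dvd => /dvdzP[u q_eq]; apply/negP => /tm_class_parity /dvdzP[z]; lia.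
elim: M => [|M IH] //.
rewrite [(3 * _)%N]mulnSr [(2 * _)%N]mulnSr (iotaD 0 (3 * M)) (iotaD 0 (2 * M)).
rewrite !count_cat IH /= !add0n !addn0.
rewrite -[((3 * M).+2)%N]addn2 -[((3 * M).+1)%N]addn1 -[((2 * M).+1)%N]addn1.
have even_qk : (2 %| 2 * q * k)%Z by apply/dvdzP; exists (q * k); ring.
have even_qk_q : (2 %| 2 * q * k - 2 * q)%Z by apply/dvdzP; exists (q * k - q); ring.
rewrite tm_class_mul3 tm_class_mul3_add1 tm_class_mul3_add2 even_class.
rewrite (odd_class _ _ _ even_qk) (odd_class _ _ _ even_qk_q).
lia.
Qed.

Lemma Ccount_recurrence {R : realType} c k (a : R) : 0 <= a ->
  `| (Ccount n c k a)%:R - ((Ccount n.+1 c (2 * q * k) (2 / 3 * a))%:R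
      + (Ccount n.+1 (~~ c) (2 * q * k - q) (2 / 3 * a))%:R
      + (Ccount n.+1 c (2 * q * k - 2 * q) (2 / 3 * a))%:R) | <= 6 :> R.
Proof.
move=> a_ge0; have a'_ge0 : 0 <= 2 / 3 * a by rewrite mulr_ge0.
rewrite !Ccount_ceiln //.
have /andP[a_le lt_a] := ceiln_itv _ a_ge0.
have /andP[a'_le lt_a'] := ceiln_itv _ a'_ge0.
set m := ceiln a in a_le lt_a *; set m' := ceiln _ in a'_le lt_a' *.
pose M := (m %/ 3)%N.
have le_3M : (3 * M <= m)%N by rewrite /M; lia.
have le_m : (m <= 3 * M + 2)%N by rewrite /M; lia.
have := le_3M; have := le_m; rewrite -!(ler_nat R) natrD !natrM => le_mR le_3MR.
have le_2M : (2 * M <= m')%N by rewrite -ltnS -(ltr_nat R) -natr1 natrM; lra.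
have le_m' : (m' <= 2 * M + 2)%N by rewrite -ltnS -(ltr_nat R) -natr1 natrD natrM; lra.
have := count_tm_class_mul3 c k M.
have /andP[] := count_iota_le (tm_class n c k) le_3M.
have /andP[] := count_iota_le (tm_class n.+1 c (2 * q * k)) le_2M.
have /andP[] := count_iota_le (tm_class n.+1 (~~ c) (2 * q * k - q)) le_2M.
have /andP[] := count_iota_le (tm_class n.+1 c (2 * q * k - 2 * q)) le_2M.
move=> lo3 hi3 lo2 hi2 lo1 hi1 lo hi blocks.
rewrite -!natrD ler_dist_nat //; lia.
Qed.
End tm_class_blocks.

Section residue_count.
Variables (P : nat) (k : int).
Hypothesis P_gt0 : (0 < P)%N.

Let in_class (i : nat) := (i%:Z == k %[mod P%:Z])%Z.

Lemma count_residue_window a : count in_class (iota a P) = 1%N.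
Proof.
elim: a => [|a IH].
  rewrite (@eq_in_count _ _ (pred1 `|(k %% P%:Z)%Z|%N)); last first.
    move=> i; rewrite mem_iota /= => lt_iP; rewrite /in_class modz_small.
      by rewrite -eqz_nat gez0_abs // modz_ge0 // eqz_nat -lt0n.
    by rewrite ltz_nat lt_iP.
  rewrite count_uniq_mem ?iota_uniq // mem_iota /= -ltz_nat gez0_abs.
    by rewrite ltz_pmod // ltz_nat.
  by rewrite modz_ge0 // eqz_nat -lt0n.
have [P' P_eq] : exists P', P = P'.+1 by exists P.-1; rewrite prednK.
move: IH; rewrite P_eq => IH.
rewrite -[P'.+1]addn1 iotaD count_cat /= addn0 -IH /= addnC; congr (_ + _)%N.
by rewrite /in_class addSnnS -P_eq PoszD modzDr.
Qed.

Lemma count_residue_mul B : count in_class (iota 0 (P * B)) = B.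
Proof.
elim: B => [|B IH]; first by rewrite muln0.
by rewrite mulnSr iotaD count_cat IH add0n count_residue_window addn1.
Qed.

Lemma count_residue_iota m :
  (m %/ P <= count in_class (iota 0 m) <= (m %/ P).+1)%N.
Proof.
have /andP[+ _] := count_iota_le in_class (leq_divM m P).
have /andP[+ _] := count_iota_le in_class (ltnW (ltn_ceil m P_gt0)).
by rewrite -!(mulnC P) !count_residue_mul => -> ->.
Qed.
End residue_count.

Lemma Ccount_sum {R : realType} n k (a : R) : 0 <= a ->
  `| (Ccount n false k a)%:R + (Ccount n true k a)%:R - a / 2 ^+ n | <= 2.
Proof.
move=> a_ge0; have /andP[a_le lt_a] := ceiln_itv _ a_ge0.
rewrite !Ccount_ceiln // -natrD.
set m := ceiln a in a_le lt_a *; set P := (2 ^ n)%N.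
have P_gt0 : (0 < P)%N by rewrite expn_gt0.
rewrite -count_predUI addnC (@eq_count _ _ pred0); last first.
  by move=> i /=; rewrite /tm_class; case: (tm i); rewrite /= ?andbF.
rewrite count_pred0 add0n.
rewrite (@eq_count _ _ (fun i : nat => (i%:Z == k %[mod P%:Z])%Z)); last first.
  by move=> i /=; rewrite /tm_class; case: (tm i); rewrite /= ?orbF.
have /andP[lo hi] := count_residue_iota _ k P_gt0 m.
set C := count _ _ in lo hi *; set B := (m %/ P)%N in lo hi *.
have PR : (2 : R) ^+ n = P%:R by rewrite natrX.
have P_ge1 : 1 <= P%:R :> R by rewrite ler1n.
have /andP[B_le lt_B] : (B * P <= m < B.+1 * P)%N by rewrite leq_divM ltn_ceil.
rewrite -(ltr_nat R) -!(ler_nat R) !natrM -!natr1 in B_le lt_B lo hi.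
have P_gt0R : 0 < P%:R :> R by lra.
have y_lo : B%:R <= m%:R / P%:R :> R by rewrite ler_pdivlMr.
have y_hi : m%:R / P%:R <= B%:R + 1 :> R by rewrite ler_pdivrMr // ltW.
have z_le : a / P%:R <= m%:R / P%:R by rewrite ler_pM2r ?invr_gt0.
have y_z : m%:R / P%:R - a / P%:R <= 1.
  by rewrite -mulrBl ler_pdivrMr // mul1r; lra.
by rewrite PR ler_norml; apply/andP; split; lra.
Qed.

Section Cratio.
Context {R : realType}.
Implicit Types (a : R) (n : nat) (c : bool) (k : int).

Definition Cratio n c k a : R := (Ccount n c k a)%:R / a.

Lemma Cratio_recurrence n (q : int) c k a : (3 * q == 1 %[mod (2 ^ n.+1)%:Z])%Z ->
  0 < a ->
  `|3 / 2 * Cratio n c k a - (Cratio n.+1 c (2 * q * k) (2 / 3 * a)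
      + Cratio n.+1 (~~ c) (2 * q * k - q) (2 / 3 * a)
      + Cratio n.+1 c (2 * q * k - 2 * q) (2 / 3 * a))| <= 9 / a.
Proof.
move=> q_inv3 a_gt0; have := Ccount_recurrence n q q_inv3 c k a (ltW a_gt0).
rewrite /Cratio; set C := (Ccount n c k a)%:R; set C1 := (Ccount _ c _ _)%:R.
set C2 := (Ccount _ (~~ c) _ _)%:R; set C3 := (Ccount _ c (_ - _) _)%:R => gap.
have -> : 3 / 2 * (C / a) - (C1 / (2 / 3 * a) + C2 / (2 / 3 * a) + C3 / (2 / 3 * a))
    = 3 / 2 * (C - (C1 + C2 + C3)) / a by field; rewrite gt_eqF.
rewrite normrM normfV (gtr0_norm a_gt0) normrM ler_pM2r ?invr_gt0 //.
by rewrite gtr0_norm //; lra.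
Qed.

Lemma Cratio_sum n k a : 0 < a ->
  `|Cratio n false k a + Cratio n true k a - (2 ^+ n)^-1| <= 2 / a.
Proof.
move=> a_gt0; have := Ccount_sum n k a (ltW a_gt0).
rewrite /Cratio; set C0 := (Ccount _ _ _ _)%:R; set C1 := (Ccount _ _ _ _)%:R => gap.
have -> : C0 / a + C1 / a - (2 ^+ n)^-1 = (C0 + C1 - a / 2 ^+ n) / a.
  by field; rewrite gt_eqF // expf_neq0.
by rewrite normrM normfV (gtr0_norm a_gt0) ler_pM2r ?invr_gt0.
Qed.

Lemma Cratio_bounded n c k (w : R) : 0 < w ->
  bounded_fun (fun x : nat => Cratio n c k (w * x%:R)).
Proof.
move=> w_gt0; apply: bounded_fun_ex_le; exists (1 + w^-1) => -[|x].
  by rewrite /Cratio mulr0 invr0 mulr0 normr0 addr_ge0 // invr_ge0 ltW.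
have a_ge : w <= w * x.+1%:R by rewrite ler_peMr ?ler1n ?ltW.
have a_gt0 : 0 < w * x.+1%:R by exact: lt_le_trans a_ge.
have /andP[_ lt_ceil] := ceiln_itv _ (ltW a_gt0).
have C_le : (Ccount n c k (w * x.+1%:R))%:R <= w * x.+1%:R + 1.
  rewrite (Ccount_ceiln _ _ _ _ (ltW a_gt0)); apply: le_trans (ltW lt_ceil).
  rewrite ler_nat.
  by rewrite (leq_trans (count_size _ _)) // size_iota.
rewrite /Cratio ger0_norm; last by rewrite divr_ge0 // ltW.
rewrite ler_pdivrMr // (le_trans C_le) // mulrDl mul1r lerD2l.
by rewrite mulrC ler_pdivlMr // mul1r.
Qed.
End Cratio.

Lemma Cratio_cvg_subseq {R : realType} (g : nat -> nat) :
  exists2 phi, increasing_seq phi &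
    forall n c k, cvgn (fun t => Cratio n c k ((2 / 3 : R) ^+ n * (g (phi t))%:R)).
Proof.
pose u (nck : nat * bool * int) t :=
  let: (n, c, k) := nck in Cratio n c k ((2 / 3 : R) ^+ n * (g t)%:R).
have [phi phi_incr u_cvg] : exists2 phi, increasing_seq phi & forall nck, cvgn (u nck \o phi).
  apply: bolzano_weierstrass_diagonal => -[[n c] k]; rewrite /u.
  have w_gt0 : 0 < (2 / 3 : R) ^+ n by rewrite exprn_gt0 // divr_gt0.
  exact (bounded_fun_comp g (Cratio_bounded n c k _ w_gt0)).
by exists phi => // n c k; exact: (u_cvg (n, c, k)).
Qed.

Lemma increasing_seq_scale_cvgry {R : realType} (N : nat -> nat) (w : R) :
  increasing_seq N -> 0 < w -> (fun t => w * (N t)%:R) @ \oo --> +oo.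
Proof.
move=> N_incr w_gt0; have N_oo : (fun t => (N t)%:R : R) @ \oo --> +oo.
  apply/cvgrnyP/cvgnyPge => A; near=> t; apply: leq_trans _ (increasing_seq_geq N_incr t).
  by near: t; apply: nbhs_infty_ge.
apply/cvgryPge => A; near=> t; rewrite -ler_pdivrMl //.
by near: t; move/cvgryPge : N_oo; exact.
Unshelve. all: end_near. Qed.

Theorem lemma19 (R : realType) (Lambda : set nat) :
  ~ finite_set Lambda ->
  exists N : nat -> nat,
    (forall t, Lambda (N t)) /\ (forall t, (N t < N t.+1)%N) /\
    exists mu : nat -> bool -> int -> R,
      (forall n c k,
        (fun t => (Ccount n c k ((2 / 3 : R) ^+ n * (N t)%:R))%:R
                    / ((2 / 3 : R) ^+ n * (N t)%:R)) @ \oo --> mu n c k) /\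
      (forall n c k, mu n c (k + (2 ^ n)%:Z)%R = mu n c k) /\
      (forall n c k (q : int), (3 * q == 1 %[mod (2 ^ n.+1)%:Z])%Z ->
         3 / 2 * mu n c k =
           mu n.+1 c (2 * q * k)%R + mu n.+1 (~~ c) (2 * q * k - q)%R
           + mu n.+1 c (2 * q * k - 2 * q)%R) /\
      (forall n k, mu n false k + mu n true k = (2 ^+ n)^-1).
Proof.
move=> Lambda_infinite.
have [g [g_incr _ g_Lambda]] := infinite_increasing_seq_wf
  (fun x => sub_finite_set (fun y => id) (finite_II x.+1)) Lambda_infinite 0%N.
have [phi phi_incr mu_cvg] := Cratio_cvg_subseq (R := R) g.
pose N := g \o phi; pose a n t := (2 / 3 : R) ^+ n * (N t)%:R.
have N_incr : increasing_seq N by exact: increasing_seq_comp.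
have a_oo n : a n @ \oo --> +oo.
  by apply: increasing_seq_scale_cvgry; rewrite // exprn_gt0 // divr_gt0.
have a_succ n t : a n.+1 t = 2 / 3 * a n t by rewrite /a exprS mulrA.
exists N; split; first by move=> t; exact: g_Lambda.
split; first exact: (increasing_seqP N).2 N_incr.
exists (fun n c k => lim (Cratio n c k \o a n @ \oo)).
have {}mu_cvg n c k : Cratio n c k \o a n @ \oo --> lim (Cratio n c k \o a n @ \oo).
  exact: mu_cvg.
split; first exact: mu_cvg.
split.
  move=> n c k; congr (lim (_ @ \oo)); apply: funext => t.
  by rewrite /= /Cratio Ccount_periodic.
split.
  move=> n c k q q_inv3; apply: (cvg_gap_unique 9 (a_oo n) _ (cvgM (cvg_cst _) (mu_cvg n c k))
    (cvgD (cvgD (mu_cvg _ _ _) (mu_cvg _ _ _)) (mu_cvg _ _ _))).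
  by move=> t a_gt0; rewrite !fctE /= !a_succ; exact: Cratio_recurrence.
move=> n k; apply: (cvg_gap_unique 2 (a_oo n) _
  (cvgD (mu_cvg n false k) (mu_cvg n true k)) (cvg_cst _)).
by move=> t a_gt0; exact: Cratio_sum.
Qed.
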